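(* Let $(L,[\cdot,\cdot],\cdot,\alpha)$ be a multiplicative Hom-post-Lie algebra. Then $(L\otimes L,\alpha\otimes\alpha)$ is a module over $L$ with the actions $x\diamond(y\otimes z)=[\alpha(x),y]\otimes\alpha(z)+\alpha(y)\otimes[\alpha(x),z]$ and $x\bullet(y\otimes z)=(\alpha(x)\cdot y)\otimes\alpha(z)+\alpha(y)\otimes(\alpha(x)\cdot z)$, for $x,y,z\in L$.
   Context: All vector spaces are over a field $\mathbb{K}$ of characteristic $\neq 2$. A Hom-Lie algebra is $(L,[\cdot,\cdot],\alpha)$ with $[\cdot,\cdot]$ bilinear skew-symmetric, $\alpha$ linear, and $[\alpha(x),[y,z]]+[\alpha(y),[z,x]]+[\alpha(z),[x,y]]=0$. A Hom-post-Lie algebra $(L,[\cdot,\cdot],\cdot,\alpha)$ is a Hom-Lie algebra with bilinear $\cdot$ such that $\alpha(z)\cdot[x,y]-[z\cdot x,\alpha(y)]-[\alpha(x),z\cdot y]=0$ and $\alpha(z)\cdot(y\cdot x)-\alpha(y)\cdot(z\cdot x)+(y\cdot z)\cdot\alpha(x)-(z\cdot y)\cdot\alpha(x)+[y,z]\cdot\alpha(x)=0$ for all $x,y,z$; it is multiplicative if $\alpha([x,y])=[\alpha(x),\alpha(y)]$ and $\alpha(x\cdot y)=\alpha(x)\cdot\alpha(y)$. A module over $L$ is a vector space $M$ with linear $\alpha_M$ and bilinear $\diamond,\bullet:L\otimes M\to M$ such that for all $x,y\in L,m\in M$: (i) $\alpha_M(x\diamond m)=\alpha(x)\diamond\alpha_M(m)$,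 $\alpha_M(x\bullet m)=\alpha(x)\bullet\alpha_M(m)$; (ii) $[x,y]\diamond\alpha_M(m)=\alpha(x)\diamond(y\diamond m)-\alpha(y)\diamond(x\diamond m)$; (iii) $(x\cdot y)\diamond\alpha_M(m)=\alpha(x)\bullet(y\diamond m)-\alpha(y)\diamond(x\bullet m)$; (iv) $[x,y]\bullet\alpha_M(m)=\alpha(x)\bullet(y\bullet m)-\alpha(y)\bullet(x\bullet m)-(x\cdot y)\bullet\alpha_M(m)+(y\cdot x)\bullet\alpha_M(m)$. *)

From HB Require Import structures.
From mathcomp Require Import all_boot all_algebra.
Set Implicit Arguments. Unset Strict Implicit. Unset Printing Implicit Defensive.
Import GRing.Theory.
Local Open Scope ring_scope.

Definition bilinear_map (K : fieldType) (U V W : lmodType K) (f : U -> V -> W) : Prop :=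
  (forall u, linear (f u)) /\ (forall v, linear (fun u => f u v)).

Definition HomLie (K : fieldType) (L : lmodType K)
  (br : L -> L -> L) (alpha : L -> L) : Prop :=
  [/\ bilinear_map br,
      (forall x y, br x y = - br y x),
      linear alpha &
      (forall x y z,
        br (alpha x) (br y z) + br (alpha y) (br z x) + br (alpha z) (br x y) = 0)].

Definition HomPostLie (K : fieldType) (L : lmodType K)
  (br dot : L -> L -> L) (alpha : L -> L) : Prop :=
  [/\ HomLie br alpha,
      bilinear_map dot,
      (forall x y z,
        dot (alpha z) (br x y) - br (dot z x) (alpha y) - br (alpha x) (dot z y) = 0) &
      (forall x y z,
        dot (alpha z) (dot y x) - dot (alpha y) (dot z x)
        + dot (dot y z) (alpha x) - dot (dot z y) (alpha x)
        + dot (br y z) (alpha x) = 0)].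

Definition HomPostLie_multiplicative (K : fieldType) (L : lmodType K)
  (br dot : L -> L -> L) (alpha : L -> L) : Prop :=
  (forall x y, alpha (br x y) = br (alpha x) (alpha y)) /\
  (forall x y, alpha (dot x y) = dot (alpha x) (alpha y)).

Definition HomPostLieModule (K : fieldType) (L : lmodType K)
  (br dot : L -> L -> L) (alpha : L -> L)
  (M : lmodType K) (alphaM : M -> M) (dia bul : L -> M -> M) : Prop :=
  [/\ linear alphaM, bilinear_map dia & bilinear_map bul] /\
  [/\ (forall x m, alphaM (dia x m) = dia (alpha x) (alphaM m)
                   /\ alphaM (bul x m) = bul (alpha x) (alphaM m)),
      (forall x y m, dia (br x y) (alphaM m)
                     = dia (alpha x) (dia y m) - dia (alpha y) (dia x m)),
      (forall x y m, dia (dot x y) (alphaM m)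
                     = bul (alpha x) (dia y m) - dia (alpha y) (bul x m)) &
      (forall x y m, bul (br x y) (alphaM m)
                     = bul (alpha x) (bul y m) - bul (alpha y) (bul x m)
                       - bul (dot x y) (alphaM m) + bul (dot y x) (alphaM m))].

(* (T, tens) is a tensor product L (x) L, characterized by its universal
   property: tens is bilinear and every bilinear map out of L x L factors
   uniquely through a linear map out of T. *)
Definition is_tensor_product (K : fieldType) (L T : lmodType K)
  (tens : L -> L -> T) : Prop :=
  bilinear_map tens /\
  forall (W : lmodType K) (f : L -> L -> W), bilinear_map f ->
    exists g : T -> W, (linear g /\ forall y z, g (tens y z) = f y z) /\
      forall g' : T -> W, linear g' -> (forall y z, g' (tens y z) = f y z) ->
        forall t, g' t = g t.

(* A multiplicative Hom-post-Lie algebra L is a module over itself through the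
   adjoint actions x ◇ y = [α x, y] and x • y = α x · y: conditions (ii)-(iv)
   are the Hom-Jacobi identity and the two Hom-post-Lie axioms evaluated at
   α x, α y.  The tensor square of any module M, with the actions extended by
   the twisted Leibniz rule, is again a module: both sides of each condition
   are linear, so it suffices to check them on pure tensors m ⊗ n; there the
   mixed terms (α y ◇ α m) ⊗ (α x ◇ α n) of the two iterated actions coincide
   because α_M intertwines the actions, and the remaining terms are the
   conditions for M in each factor. *)

From HB Require Import structures.
From mathcomp Require Import all_boot all_algebra.
Import GRing.Theory.
Local Open Scope ring_scope.
Set Implicit Arguments. Unset Strict Implicit.

Section LinearMaps.
Variables (K : fieldType) (U V W : lmodType K).

Lemma linear_funD (f : U -> V) : linear f -> {morph f : u v / u + v}.
Proof. by case/GRing.semilinear_linear. Qed.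

Lemma linear_fun0 (f : U -> V) : linear f -> f 0 = 0.
Proof. by move=> hf; rewrite -(subrr (0 : U)) (zmod_morphism_linear hf) subrr. Qed.

Lemma linear_funN (f : U -> V) : linear f -> {morph f : u / - u}.
Proof.
by move=> hf u; rewrite -[- u]sub0r (zmod_morphism_linear hf) linear_fun0 ?sub0r.
Qed.

Lemma linear_comp (f : V -> W) (g : U -> V) :
  linear f -> linear g -> linear (fun u => f (g u)).
Proof. by move=> hf hg a u v; rewrite hg hf. Qed.

Lemma linear_add (f g : U -> V) :
  linear f -> linear g -> linear (fun u => f u + g u).
Proof. by move=> hf hg a u v; rewrite hf hg scalerDr addrACA. Qed.

Lemma linear_sub (f g : U -> V) :
  linear f -> linear g -> linear (fun u => f u - g u).
Proof. by move=> hf hg a u v; rewrite hf hg opprD scalerBr addrACA. Qed.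

Lemma linear_scale (c : K) (f : U -> V) : linear f -> linear (fun u => c *: f u).
Proof. by move=> hf a u v; rewrite hf scalerDr !scalerA mulrC. Qed.

End LinearMaps.

Lemma tensor_product_ext (K : fieldType) (L T W : lmodType K) (tens : L -> L -> T)
    (g1 g2 : T -> W) :
  is_tensor_product tens -> linear g1 -> linear g2 ->
  (forall y z, g1 (tens y z) = g2 (tens y z)) -> forall t, g1 t = g2 t.
Proof.
case=> [[tensl tensr] univ] g1_lin g2_lin g12 t.
have f_bilin : bilinear_map (fun y z => g1 (tens y z)).
  by split=> [y|z] a u v /=; rewrite ?tensl ?(tensr z) g1_lin.
have [g [_ g_uniq]] := univ W _ f_bilin.
rewrite (g_uniq g1 g1_lin (fun _ _ => erefl)).
by rewrite (g_uniq g2 g2_lin (fun y z => esym (g12 y z))).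
Qed.

Lemma HomPostLie_adjoint_module (K : fieldType) (L : lmodType K)
    (br dot : L -> L -> L) (alpha : L -> L) :
  HomPostLie br dot alpha -> HomPostLie_multiplicative br dot alpha ->
  HomPostLieModule br dot alpha alpha
    (fun x y => br (alpha x) y) (fun x y => dot (alpha x) y).
Proof.
case=> [[[brl brr] br_skew alpha_lin jacobi] [dotl dotr] dot_br dot_dot].
case=> [alpha_br alpha_dot].
split.
  split=> //; split=> // y.
  - exact: linear_comp (brr y) alpha_lin.
  - exact: linear_comp (dotr y) alpha_lin.
split=> [x m|x y m|x y m|x y m] /=; rewrite ?alpha_br ?alpha_dot //.
- have := jacobi (alpha x) (alpha y) m.
  by rewrite (br_skew m) (linear_funN (brl _)) (br_skew (alpha m)) => /subr0_eq <-.
- by have := dot_br (alpha y) m (alpha x); rewrite addrAC => /subr0_eq <-.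
- have := dot_dot m (alpha y) (alpha x).
  rewrite (br_skew (alpha y)) (linear_funN (dotr _)) [X in X - _ = 0]addrAC.
  by move=> /subr0_eq <-.
Qed.

Lemma cross_terms_cancel (V : zmodType) (a1 a2 b1 b2 c d : V) :
  (a1 + c + (d + b1)) - (a2 + d + (c + b2)) = (a1 - a2) + (b1 - b2).
Proof.
rewrite (addrC d b1) (addrACA a1) (addrC c b2) (addrACA a2) (addrC d c).
by rewrite opprD (addrACA (a1 + b1)) subrr addr0 opprD addrACA.
Qed.

Lemma cross_terms_cancel_sub (V : zmodType) (a1 a2 b1 b2 c d e1 e2 f1 f2 : V) :
  (a1 + c + (d + b1)) - (a2 + d + (c + b2)) - (e1 + f1) + (e2 + f2)
  = (a1 - a2 - e1 + e2) + (b1 - b2 - f1 + f2).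
Proof.
by rewrite cross_terms_cancel opprD (addrACA (a1 - a2)) (addrACA (a1 - a2 - e1)).
Qed.

Section TensorSquare.
Variables (K : fieldType) (L : lmodType K) (br dot : L -> L -> L) (alpha : L -> L).
Variables (M : lmodType K) (alphaM : M -> M) (dia bul : L -> M -> M).
Hypothesis hM : HomPostLieModule br dot alpha alphaM dia bul.
Variables (T : lmodType K) (tens : M -> M -> T).
Hypothesis hT : is_tensor_product tens.
Variable alphaT : T -> T.
Hypothesis alphaT_lin : linear alphaT.
Hypothesis alphaT_tens : forall m n, alphaT (tens m n) = tens (alphaM m) (alphaM n).

Definition is_leibniz_lift (f : M -> M) (fT : T -> T) :=
  linear fT /\
  forall m n, fT (tens m n) = tens (f m) (alphaM n) + tens (alphaM m) (f n).

Let tens_linl n : linear (tens^~ n). Proof. by case: hT => -[]. Qed.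
Let tens_linr m : linear (tens m). Proof. by case: hT => -[]. Qed.
Let tensDl n := linear_funD (tens_linl n).
Let tensDr m := linear_funD (tens_linr m).
Let tensBl n := zmod_morphism_linear (tens_linl n).
Let tensBr m := zmod_morphism_linear (tens_linr m).

Lemma leibniz_lift_commute f fT g gT :
  is_leibniz_lift f fT -> is_leibniz_lift g gT ->
  (forall m, alphaM (f m) = g (alphaM m)) ->
  forall t, alphaT (fT t) = gT (alphaT t).
Proof.
move=> [fT_lin fT_tens] [gT_lin gT_tens] fg.
apply: (tensor_product_ext hT) => [||m n]; try exact: linear_comp.
by rewrite fT_tens linear_funD // !alphaT_tens gT_tens !fg.
Qed.

Lemma leibniz_lift_comp_tens f fT g gT g' :
  is_leibniz_lift f fT -> is_leibniz_lift g gT ->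
  (forall p, alphaM (g p) = g' (alphaM p)) ->
  forall m n, fT (gT (tens m n)) =
    tens (f (g m)) (alphaM (alphaM n)) + tens (g' (alphaM m)) (f (alphaM n))
    + (tens (f (alphaM m)) (g' (alphaM n)) + tens (alphaM (alphaM m)) (f (g n))).
Proof.
move=> [fT_lin fT_tens] [_ gT_tens] gg' m n.
by rewrite gT_tens linear_funD // !fT_tens !gg'.
Qed.

Lemma leibniz_lift_bilinear (act : L -> M -> M) (actT : L -> T -> T) :
  bilinear_map act -> (forall x, is_leibniz_lift (act x) (actT x)) ->
  bilinear_map actT.
Proof.
move=> [_ act_lin] act_lift; split=> [x|t a x y]; first by case: (act_lift x).
have actT_lin z := (act_lift z).1.
move: t; apply: (tensor_product_ext hT) => [||m n] //.
  by apply: linear_add; [apply: linear_scale|]; apply: actT_lin.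
rewrite !(act_lift _).2 (act_lin m) (act_lin n) /= tens_linl tens_linr.
by rewrite scalerDr addrACA.
Qed.

Variables (diaT bulT : L -> T -> T).
Hypothesis diaT_lift : forall x, is_leibniz_lift (dia x) (diaT x).
Hypothesis bulT_lift : forall x, is_leibniz_lift (bul x) (bulT x).

Let diaT_lin x : linear (diaT x). Proof. exact: (diaT_lift x).1. Qed.
Let bulT_lin x : linear (bulT x). Proof. exact: (bulT_lift x).1. Qed.

Lemma tensor_dia_br x y t :
  diaT (br x y) (alphaT t) = diaT (alpha x) (diaT y t) - diaT (alpha y) (diaT x t).
Proof.
case: hM => _ [act_alpha dia_br _ _].
move: t; apply: (tensor_product_ext hT) => [||m n].
- exact: linear_comp.
- by apply: linear_sub; apply: linear_comp.
rewrite alphaT_tens (diaT_lift _).2.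
rewrite !(leibniz_lift_comp_tens (diaT_lift _) (diaT_lift _)
          (fun p => (act_alpha _ p).1)).
by rewrite !dia_br tensBl tensBr cross_terms_cancel.
Qed.

Lemma tensor_dia_dot x y t :
  diaT (dot x y) (alphaT t) = bulT (alpha x) (diaT y t) - diaT (alpha y) (bulT x t).
Proof.
case: hM => _ [act_alpha _ dia_dot _].
move: t; apply: (tensor_product_ext hT) => [||m n].
- exact: linear_comp.
- by apply: linear_sub; apply: linear_comp.
rewrite alphaT_tens (diaT_lift _).2.
rewrite (leibniz_lift_comp_tens (bulT_lift _) (diaT_lift _)
          (fun p => (act_alpha _ p).1)).
rewrite (leibniz_lift_comp_tens (diaT_lift _) (bulT_lift _)
          (fun p => (act_alpha _ p).2)).
by rewrite !dia_dot tensBl tensBr cross_terms_cancel.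
Qed.

Lemma tensor_bul_br x y t :
  bulT (br x y) (alphaT t) = bulT (alpha x) (bulT y t) - bulT (alpha y) (bulT x t)
    - bulT (dot x y) (alphaT t) + bulT (dot y x) (alphaT t).
Proof.
case: hM => _ [act_alpha _ _ bul_br].
move: t; apply: (tensor_product_ext hT) => [||m n].
- exact: linear_comp.
- by apply: linear_add; [apply: linear_sub; [apply: linear_sub|] | ];
    apply: linear_comp.
rewrite !(leibniz_lift_comp_tens (bulT_lift _) (bulT_lift _)
          (fun p => (act_alpha _ p).2)).
rewrite alphaT_tens !(bulT_lift _).2.
by rewrite !bul_br tensDl tensDr !tensBl !tensBr cross_terms_cancel_sub.
Qed.

Lemma tensor_square_module : HomPostLieModule br dot alpha alphaT diaT bulT.
Proof.
case: hM => -[_ dia_bilin bul_bilin] [act_alpha _ _ _].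
split; first by split; [| apply: leibniz_lift_bilinear dia_bilin diaT_lift
                         | apply: leibniz_lift_bilinear bul_bilin bulT_lift].
split=> [x t|||]; [split | exact: tensor_dia_br | exact: tensor_dia_dot
                          | exact: tensor_bul_br].
- exact: leibniz_lift_commute (diaT_lift x) _ (fun m => (act_alpha x m).1) t.
- exact: leibniz_lift_commute (bulT_lift x) _ (fun m => (act_alpha x m).2) t.
Qed.

End TensorSquare.

Theorem mainTheorem4 (K : fieldType) (hK : (2%:R : K) != 0)
  (L : lmodType K) (br dot : L -> L -> L) (alpha : L -> L)
  (hL : HomPostLie br dot alpha) (hmult : HomPostLie_multiplicative br dot alpha)
  (T : lmodType K) (tens : L -> L -> T) (hT : is_tensor_product tens)
  (alphaT : T -> T) (dia bul : L -> T -> T)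
  (halphaT_lin : linear alphaT)
  (halphaT : forall y z, alphaT (tens y z) = tens (alpha y) (alpha z))
  (hdia_lin : forall x, linear (dia x))
  (hdia : forall x y z,
     dia x (tens y z) = tens (br (alpha x) y) (alpha z) + tens (alpha y) (br (alpha x) z))
  (hbul_lin : forall x, linear (bul x))
  (hbul : forall x y z,
     bul x (tens y z) = tens (dot (alpha x) y) (alpha z) + tens (alpha y) (dot (alpha x) z)) :
  HomPostLieModule br dot alpha alphaT dia bul.
Proof.
apply: (tensor_square_module (HomPostLie_adjoint_module hL hmult) hT halphaT_lin halphaT).
- by move=> x; split; [exact: hdia_lin | exact: hdia].
- by move=> x; split; [exact: hbul_lin | exact: hbul].
Qed.
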